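(* Let $S,T\subseteq\mathbb{Z}_{>0}$ be finite with $T\preceq S$. Then $T\triangleleft S\preceq S$.
   Context: For a finite set $S\subseteq\mathbb{Z}_{>0}$, $S(i)$ denotes its $i$th smallest element. $T\preceq S$ means $|T|\ge|S|$ and $T(i)<S(i)$ for all $i\in[|S|]$. For finite $S,T$, $T\triangleleft S$ is computed by going through $S$ from largest to smallest; each $s$ picks the largest element of $T$ less than $s$ not yet picked (if one exists); $T\triangleleft S$ is the set of picked elements. *)

From mathcomp Require Import all_boot.
From mathcomp Require Import finmap.
Set Implicit Arguments. Unset Strict Implicit. Unset Printing Implicit Defensive.
Local Open Scope fset_scope.

Definition pos_set (S : {fset nat}) : bool := all (fun x => 0 < x) S.

Definition sorted_elems (S : {fset nat}) : seq nat := sort leq S.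

(* S(i) : the i-th smallest element of S, for 1 <= i <= #|S| *)
Definition ith (S : {fset nat}) (i : nat) : nat := nth 0 (sorted_elems S) i.-1.

Definition preceq (T S : {fset nat}) : Prop :=
  #|` S| <= #|` T| /\ forall i, 1 <= i <= #|` S| -> ith T i < ith S i.

(* the greedy procedure: [avail] = elements of T not yet picked,
   [ss] = elements of S still to process, from largest to smallest *)
Fixpoint pick_aux (avail : seq nat) (ss : seq nat) : seq nat :=
  match ss with
  | [::] => [::]
  | s :: ss' =>
      let cands := [seq t <- avail | t < s] in
      if cands is [::] then pick_aux avail ss'
      else let m := \max_(t <- cands) t in m :: pick_aux (rem m avail) ss'
  end.

Definition tri (T S : {fset nat}) : {fset nat} :=
  [fset x | x in pick_aux (enum_fset T) (rev (sorted_elems S))].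

(** The order [T ⪯ S] on sorted enumerations is equivalent to the counting
    condition: for every threshold [x], [S] has at most as many elements
    [<= x] as [T] has elements [< x].  Processing [S] from its largest element
    [s] down, the greedy step removes from [T] the largest [m < s]; this keeps
    the counting condition for the remaining elements of [S], because every
    element of [T] below [s] is at most [m].  Hence the picked elements
    satisfy the counting condition with respect to [S]. *)

From mathcomp Require Import all_boot.
From mathcomp Require Import finmap.
From mathcomp Require Import zify.
Local Open Scope fset_scope.

Definition seq_preceq (t s : seq nat) : Prop :=
  size s <= size t /\ forall i, i < size s -> nth 0 t i < nth 0 s i.

Definition dominates (t s : seq nat) : Prop :=
  forall x, count (fun y => y <= x) s <= count (fun y => y < x) t.

Lemma count_eq0_in (T : eqType) (a : pred T) (s : seq T) :
  {in s, forall y, ~~ a y} -> count a s = 0.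
Proof. by move=> sNa; apply/eqP; rewrite -leqn0 leqNgt -has_count; apply/hasPn. Qed.

Lemma dominates_cons {a b : nat} {t s : seq nat} :
  b < a -> dominates t s -> dominates (b :: t) (a :: s).
Proof.
move=> ltba dom_ts x /=; apply: leq_add (dom_ts x).
by case: (leqP a x) => // /(leq_trans ltba) ->.
Qed.

Lemma perm_dominates {t1 t2 s1 s2 : seq nat} :
  dominates t1 s1 -> perm_eq t1 t2 -> perm_eq s1 s2 -> dominates t2 s2.
Proof. by move=> dom /permP pt /permP ps x; rewrite -pt -ps. Qed.

Lemma seq_preceq_dominates t s : seq_preceq t s -> dominates t s.
Proof.
elim: s t => [|a s IHs] [|b t] //= [sz_st lt_ts]; first by move=> x.
apply: dominates_cons; first exact: (lt_ts 0).
by apply: IHs; split=> // i; apply: (lt_ts i.+1).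
Qed.

Lemma dominates_seq_preceq t s :
  sorted ltn s -> sorted ltn t -> dominates t s -> seq_preceq t s.
Proof.
elim: s t => [|a s IHs] t /= sorted_s sorted_t dom_ts; first by [].
have gt_a_s : all (fun y => a < y) s by exact: (order_path_min ltn_trans).
have := dom_ts a; rewrite /= leqnn.
case: t sorted_t dom_ts => [|b t] //= sorted_t dom_ts dom_a.
have gt_b_t : all (fun y => b < y) t by exact: (order_path_min ltn_trans).
have ltba : b < a.
  rewrite ltnNge; apply/negP=> leab; move: dom_a; rewrite ltnNge leab /=.
  rewrite (@count_eq0_in _ _ t) // => y /(allP gt_b_t) /ltnW leby.
  by rewrite -leqNgt (leq_trans leab).
have [sz_st lt_ts] : seq_preceq t s.
  apply: IHs; [exact: path_sorted sorted_s | exact: path_sorted sorted_t | move=> x].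
  case: (leqP a x) => [leax | ltxa].
    by have := dom_ts x; rewrite /= leax (leq_trans ltba leax).
  rewrite count_eq0_in // => y /(allP gt_a_s) /(ltn_trans ltxa).
  by rewrite ltnNge.
by split=> // -[|i] //; apply: lt_ts.
Qed.

Lemma sorted_ltn_elems (S : {fset nat}) : sorted ltn (sorted_elems S).
Proof.
rewrite ltn_sorted_uniq_leq sort_uniq fset_uniq.
exact: (sort_sorted leq_total).
Qed.

Lemma preceq_seq_preceq (T S : {fset nat}) :
  preceq T S <-> seq_preceq (sorted_elems T) (sorted_elems S).
Proof.
rewrite /preceq /seq_preceq /sorted_elems !size_sort.
split=> -[sz_ST lt_TS]; split=> //.
  by move=> i ltiS; apply: (lt_TS i.+1).
by case=> // i /andP[_ leiS]; apply: lt_TS.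
Qed.

Lemma preceq_dominates (T S : {fset nat}) : preceq T S <-> dominates T S.
Proof.
have perm_elems (A : {fset nat}) : perm_eq (sorted_elems A) A by rewrite perm_sort.
rewrite preceq_seq_preceq; split=> [/seq_preceq_dominates dom_TS | dom_TS].
  exact: perm_dominates dom_TS _ _.
apply: dominates_seq_preceq (sorted_ltn_elems _) (sorted_ltn_elems _) _.
by apply: (perm_dominates dom_TS); rewrite perm_sym.
Qed.

Lemma bigmax_mem (l : seq nat) : l != [::] -> \max_(t <- l) t \in l.
Proof.
elim: l => // c [|d l] IHl _; first by rewrite big_seq1 mem_head.
rewrite big_cons /maxn; case: ltnP => _; last exact: mem_head.
by rewrite inE IHl ?orbT.
Qed.

Section Greedy.

Context {A : seq nat} {s : nat}.

Let m := \max_(t <- [seq t <- A | t < s]) t.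

Lemma greedy_pick_spec :
  has (fun t => t < s) A ->
  [/\ m \in A, m < s & {in A, forall a, a < s -> a <= m}].
Proof.
rewrite has_filter => cands_nonnil.
have := @bigmax_mem _ cands_nonnil; rewrite mem_filter => /andP[ltms mA].
split=> // a aA ltas; apply: leq_bigmax_seq => //.
by rewrite mem_filter ltas.
Qed.

Lemma dominates_rem_greedy {ss : seq nat} :
  all (fun y => y <= s) ss -> dominates A (s :: ss) -> dominates (rem m A) ss.
Proof.
move=> le_ss_s dom_A.
have cnt_s : (size ss).+1 <= count (fun y => y < s) A.
  have cnt_ss : count (fun y => y <= s) ss = size ss by apply/eqP; rewrite -all_count.
  by have := dom_A s; rewrite /= leqnn cnt_ss.
have /greedy_pick_spec[mA ltms max_m] : has (fun t => t < s) A.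
  by rewrite has_count (leq_trans _ cnt_s).
move=> x; have := dom_A x; rewrite /= count_rem mA /=.
case: (ltnP m x) => [ltmx | lexm]; last by rewrite subn0 => /(leq_trans (leq_addl _ _)).
case: (leqP s x) => [lesx | ltxs]; first by rewrite /=; lia.
have eq_cnt : count (fun y => y < x) A = count (fun y => y < s) A.
  apply: eq_in_count => a aA /=; apply/idP/idP => [ltax | ltas].
    exact: ltn_trans ltax ltxs.
  exact: leq_ltn_trans (max_m a aA ltas) ltmx.
by rewrite eq_cnt /=; have := count_size (fun y => y <= x) ss; lia.
Qed.

End Greedy.

Lemma pick_aux_sub (A ss : seq nat) : {subset pick_aux A ss <= A}.
Proof.
elim: ss A => [|s ss IHss] A y /=; first by rewrite in_nil.
case cands: [seq t <- A | t < s] => [|c cs]; first exact: IHss.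
have /greedy_pick_spec[mA _ _] : has (fun t => t < s) A by rewrite has_filter cands.
rewrite -cands inE => /predU1P[-> // | /IHss].
exact: mem_rem.
Qed.

Lemma pick_aux_uniq (A ss : seq nat) : uniq A -> uniq (pick_aux A ss).
Proof.
elim: ss A => [|s ss IHss] A //= uA.
case cands: [seq t <- A | t < s] => [|c cs]; first exact: IHss.
rewrite -cands /= IHss ?rem_uniq // andbT.
by apply/negP=> /pick_aux_sub; rewrite mem_rem_uniq // inE eqxx.
Qed.

Lemma pick_aux_dominates {A ss : seq nat} :
  sorted geq ss -> dominates A ss -> dominates (pick_aux A ss) ss.
Proof.
elim: ss A => [|s ss IHss] A /= sorted_ss dom_A; first by move=> x.
have le_ss_s : all (fun y => y <= s) ss.
  exact: order_path_min (rev_trans leq_trans) sorted_ss.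
have cnt_s : 0 < count (fun y => y < s) A.
  by have := dom_A s; rewrite /= leqnn; apply/leq_trans/leq_addr.
have /greedy_pick_spec[_ ltms _] : has (fun t => t < s) A by rewrite has_count.
case cands: [seq t <- A | t < s] => [|c cs].
  by move: cnt_s; rewrite -size_filter cands.
rewrite -cands; apply: dominates_cons => //.
exact: IHss (path_sorted sorted_ss) (dominates_rem_greedy le_ss_s dom_A).
Qed.

Lemma perm_tri (T S : {fset nat}) :
  perm_eq (tri T S) (pick_aux T (rev (sorted_elems S))).
Proof.
apply: uniq_perm; rewrite ?pick_aux_uniq ?fset_uniq // => x.
by rewrite /tri inE.
Qed.

Theorem corollary4p8 (S T : {fset nat}) :
  pos_set S -> pos_set T -> preceq T S -> preceq (tri T S) S.
Proof.
move=> _ _; rewrite !preceq_dominates => dom_TS.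
have perm_revS : perm_eq (rev (sorted_elems S)) S by rewrite perm_rev perm_sort.
have sorted_revS : sorted geq (rev (sorted_elems S)).
  by rewrite rev_sorted; exact: (sort_sorted leq_total).
have dom_revS : dominates T (rev (sorted_elems S)).
  by apply: (perm_dominates dom_TS); rewrite // perm_sym.
apply: (perm_dominates (pick_aux_dominates sorted_revS dom_revS) _ perm_revS).
by rewrite perm_sym perm_tri.
Qed.
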